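(* Let $q$ be a prime power, $m\ge 2$, $1\le k\le n-1$, and let $\mathcal{C}\subseteq \mathbb{F}_{q^m}^n$ be a linear MRD code of dimension $k$, written as $\mathcal{C}=\mathrm{rs}[\,I_k\mid X\,]$ with $X\in\mathbb{F}_{q^m}^{k\times(n-k)}$ (its generator matrix in systematic form). Let $0<s<m$ with $\gcd(s,m)=1$. Then $\mathcal{C}$ is a generalized Gabidulin code with parameter $s$ if and only if $\mathrm{rk}(X^{(q^s)}-X) = 1$.
   Context: Fix an $\mathbb{F}_q$-basis $b_1,\dots,b_m$ of $\mathbb{F}_{q^m}$. The rank of $v\in\mathbb{F}_{q^m}^n$ is the rank of the matrix $M\in\mathbb{F}_q^{m\times n}$ with $v_j=\sum_i M_{ij}b_i$, and the rank distance is $d_R(u,v)=\mathrm{rk}(u-v)$. A linear rank-metric code of length $n$ and dimension $k$ is a $k$-dimensional $\mathbb{F}_{q^m}$-subspace of $\mathbb{F}_{q^m}^n$; it is MRD if its minimum rank distance equals $n-k+1$. Every linear MRD code has a unique generator matrix of the form $[\,I_k\mid X\,]$. $\mathrm{rs}(G)$ is the $\mathbb{F}_{q^m}$-row space of $G$. For a matrix $X$, $X^{(q^s)}$ is obtained by raising each entry to the $q^s$-th power. For $s$ coprime to $m$ and $g_1,\dots,g_n\in\mathbb{F}_{q^m}$ linearly independent over $\mathbb{F}_q$, the generalized Gabidulin code with parameter $s$ and dimension $k$ is the row space of the $k\times n$ matrix whose $(i,j)$ entry is $g_j^{q^{s(i-1)}}$, $i=1,\dots,k$. *)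

From HB Require Import structures.
From mathcomp Require Import all_boot all_order all_algebra all_field.
Set Implicit Arguments. Unset Strict Implicit. Unset Printing Implicit Defensive.
Import GRing.Theory.
Local Open Scope ring_scope.

(* Setting: F = F_q (a finite field), L = F_{q^m} a finite extension of F
   of degree m = \dim {:L}.  The fixed F-basis b_1..b_m of L is vbasis {:L}. *)

Section RankMetric.
Variables (F : finFieldType) (L : fieldExtType F).

Definition expand_mx (n : nat) (v : 'rV[L]_n) : 'M[F]_(\dim {:L}, n) :=
  \matrix_(i < \dim {:L}, j < n) coord (vbasis {:L}) i (v 0 j).

Definition rk (n : nat) (v : 'rV[L]_n) : nat := \rank (expand_mx v).

Definition dR (n : nat) (u v : 'rV[L]_n) : nat := rk (u - v).

Definition in_code (k n : nat) (G : 'M[L]_(k, n)) (c : 'rV[L]_n) : bool :=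
  (c <= G)%MS.

Definition min_rank_dist_eq (k n : nat) (G : 'M[L]_(k, n)) (d : nat) : Prop :=
  (forall u v, in_code G u -> in_code G v -> u != v -> (d <= dR u v)%N) /\
  (exists u v, [/\ in_code G u, in_code G v, u != v & dR u v = d]).

Definition is_MRD (k n : nat) (G : 'M[L]_(k, n)) : Prop :=
  \rank G = k /\ min_rank_dist_eq G (n - k + 1).

Definition gab_mx (k n s : nat) (g : 'rV[L]_n) : 'M[L]_(k, n) :=
  \matrix_(i < k, j < n) (g 0 j) ^+ (#|F| ^ (s * i)).

Definition is_gen_gabidulin (k n s : nat) (G : 'M[L]_(k, n)) : Prop :=
  exists g : 'rV[L]_n,
    free [seq g 0 j | j <- enum 'I_n] /\ (G == gab_mx k s g)%MS.

Definition frob_mx (s k r : nat) (X : 'M[L]_(k, r)) : 'M[L]_(k, r) :=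
  map_mx (fun x => x ^+ (#|F| ^ s)) X.

End RankMetric.

(* Write sigma for x |-> x ^+ q ^ s acting entrywise, G = [I | X] and C = rs G. As
   gcd (s, m) = 1, the fixed field of sigma is F_q, so a nonzero sigma-stable
   subspace of L^n contains a nonzero vector with entries in F_q, of rank 1;
   since every nonzero codeword of the MRD code C has rank n - k + 1 >= 2, C has
   no nonzero sigma-stable subspace. Moreover rk [G; sigma G] = k + rk (sigma X - X).
   If C = Gab_k(g) then C + sigma C lies in Gab_(k+1)(g), so rk (sigma X - X) <= 1,
   and it is not 0 as C is not sigma-stable. Conversely, if rk (sigma X - X) = 1,
   the chain V_0 = C, V_(i+1) = V_i :&: sigma V_i first drops by one dimension
   and, its dimensions being concave, by at most one at each later step; hence
   V_(k-1) <> 0, and a nonzero element of it is sigma^(k-1) g with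
   g, sigma g, ..., sigma^(k-1) g all in C. These k vectors span C, because the
   spans of their initial segments cannot stabilise (a stable span would be
   sigma-stable), and the entries of g are F_q-independent, because an F_q-relation
   among them would hold for every codeword. *)

From HB Require Import structures.
From mathcomp Require Import all_boot all_order all_algebra all_field.
From mathcomp Require Import zify.
Set Implicit Arguments. Unset Strict Implicit. Unset Printing Implicit Defensive.
Import GRing.Theory.
Local Open Scope ring_scope.

Section Frobenius.
Variables (F : finFieldType) (L : fieldExtType F).
Local Notation q := #|F|.
Local Notation m := (\dim {:L}).

Definition frob (e : nat) (x : L) : L := x ^+ (q ^ e).

Lemma frob0 x : frob 0 x = x.
Proof. by rewrite /frob expn0 expr1. Qed.

Lemma frobD e1 e2 x : frob e1 (frob e2 x) = frob (e1 + e2) x.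
Proof. by rewrite /frob -exprM -expnD addnC. Qed.

Lemma pchar_nat_card_exp e : [pchar L].-nat (q ^ e)%N.
Proof.
have [p _ pcharFp] := finPcharP F.
rewrite (eq_pnat _ (pchar_lalg L)) (eq_pnat _ (pcharf_eq pcharFp)).
by rewrite (card_pprimeChar pcharFp) -expnM pnatX pnat_id ?(pcharf_prime pcharFp).
Qed.

Lemma frob_is_zmod_morphism e : zmod_morphism (frob e).
Proof.
by move=> x y; rewrite /frob exprDn_pchar ?exprNn_pchar ?pchar_nat_card_exp.
Qed.

Lemma frob_is_monoid_morphism e : monoid_morphism (frob e).
Proof. by split=> [|x y]; rewrite /frob ?expr1n ?exprMn. Qed.

HB.instance Definition _ e :=
  GRing.isZmodMorphism.Build L L (frob e) (frob_is_zmod_morphism e).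
HB.instance Definition _ e :=
  GRing.isMonoidMorphism.Build L L (frob e) (frob_is_monoid_morphism e).

Lemma frob_alg e (a : F) : frob e a%:A = a%:A.
Proof.
rewrite /frob -in_algE -rmorphXn; congr (in_alg L _).
by elim: e => [|e IH]; rewrite ?expn0 ?expr1 // expnSr exprM IH expf_card.
Qed.

Lemma frob_is_scalable e : scalable (frob e).
Proof.
move=> a x; rewrite -[a *: x]mulr_algl -[a *: frob e x]mulr_algl {1}/frob exprMn.
by have := frob_alg e a; rewrite /frob => ->.
Qed.

HB.instance Definition _ e :=
  GRing.isScalable.Build F L L *:%R (frob e) (frob_is_scalable e).

Lemma frob_dim x : frob m x = x.
Proof. by apply/eqP; rewrite -(Fermat's_little_theorem (aspacef L)) memvf. Qed.

Lemma frobM_fixed e u x : frob e x = x -> frob (e * u) x = x.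
Proof.
by move=> fx; elim: u => [|u IH]; rewrite ?muln0 ?frob0 // mulnS -frobD IH fx.
Qed.

Lemma frobK e x : frob e (frob (e * m.-1) x) = x.
Proof.
rewrite frobD addnC -mulnSr prednK ?adim_gt0 // mulnC.
exact/frobM_fixed/frob_dim.
Qed.

Lemma frob_inj e : injective (frob e).
Proof. exact: fmorph_inj. Qed.

Lemma frob_fixed_mem1 s x : (0 < s)%N -> coprime s m -> frob s x = x -> x \in 1%VS.
Proof.
move=> s_gt0 cop_sm fx; rewrite (Fermat's_little_theorem 1%AS) /= dimv1 expn1.
have [a b /= Bezout _] := egcdnP m s_gt0.
rewrite (eqP cop_sm) in Bezout.
have := frobM_fixed a fx; rewrite mulnC Bezout addnC -frobD mulnC.
by rewrite (frobM_fixed _ (frob_dim x)) /frob expn1 => ->.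
Qed.

End Frobenius.

Lemma rV_neq0_entry (K : nzRingType) n (w : 'rV[K]_n) : w != 0 -> exists j, w 0 j != 0.
Proof.
move=> nz_w; apply/existsP; apply: contraNT nz_w => /existsPn w0.
by apply/eqP/rowP => j; rewrite mxE; apply/eqP/negbNE.
Qed.

Lemma row_free_delta_rows_but (K : fieldType) k n (f : 'I_k -> 'I_n) (l0 : 'I_k)
    (u : 'I_n -> K) (j1 : 'I_n) :
  injective f -> u j1 != 0 -> (forall l, l != l0 -> f l != j1) ->
  row_free (\matrix_(l, j) if l == l0 then u j else (j == f l)%:R).
Proof.
move=> inj_f u_j1 f_j1; apply/inj_row_free => v /rowP v0.
have v_l0 : v 0 l0 = 0.
  move: (v0 j1); rewrite !mxE (bigD1 l0) //= big1 ?addr0 => [|l /negbTE nl].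
    by rewrite mxE eqxx => /eqP; rewrite mulf_eq0 (negbTE u_j1) orbF => /eqP.
  by rewrite mxE nl eq_sym (negbTE (f_j1 l _)) ?nl ?mulr0.
apply/rowP => l; rewrite mxE; have [-> //|nl] := eqVneq l l0.
move: (v0 (f l)); rewrite !mxE (bigD1 l) //= big1 ?addr0 => [|l' nl'].
  by rewrite mxE (negbTE nl) eqxx mulr1.
rewrite mxE; have [-> |nl0] := eqVneq l' l0; first by rewrite v_l0 mul0r.
by rewrite (inj_eq inj_f) eq_sym (negbTE nl') mulr0.
Qed.

Lemma mxrank_col_row_mx1 (K : fieldType) (k r : nat) (X Y : 'M[K]_(k, r)) :
  \rank (col_mx (row_mx 1%:M X) (row_mx 1%:M Y)) = (k + \rank (Y - X)%R)%N.
Proof.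
set P : 'M[K]_(k + k) := block_mx 1%:M 0 1%:M 1%:M.
set Q : 'M[K]_(k + r) := block_mx 1%:M X 0 1%:M.
have -> : col_mx (row_mx 1%:M X) (row_mx 1%:M Y) = P *m block_mx 1%:M 0 0 (Y - X) *m Q.
  rewrite -block_mxEv /P /Q !mulmx_block.
  by rewrite !(mul1mx, mulmx1, mul0mx, mulmx0, addr0, add0r) addrC subrK.
have P_full : row_full P.
  apply/row_fullP; exists (block_mx 1%:M 0 (- 1%:M) 1%:M).
  rewrite /P mulmx_block !(mul1mx, mulmx1, mul0mx, mulmx0, addr0, add0r).
  by rewrite addrC subrr -scalar_mx_block.
have Q_free : row_free Q.
  apply/row_freeP; exists (block_mx 1%:M (- X) 0 1%:M).
  rewrite /Q mulmx_block !(mul1mx, mulmx1, mul0mx, mulmx0, addr0, add0r).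
  by rewrite addNr -scalar_mx_block.
by rewrite mxrankMfree // (eqmxMfull _ P_full) rank_diag_block_mx mxrank1.
Qed.

Section RankBounds.
Variables (F : finFieldType) (L : fieldExtType F) (n : nat).

Lemma rk_le1 (w : 'rV[L]_n) : (forall j, w 0 j \in 1%VS) -> (rk w <= 1)%N.
Proof.
move=> w_F; rewrite /rk.
have -> : expand_mx w = (\col_i coord (vbasis {:L}) i 1) *m
    (\row_j coord [tuple 1] 0 (w 0 j)).
  apply/matrixP => i j; rewrite !mxE big_ord1 !mxE.
  have /vlineP[a ->] := w_F j.
  have c1 : coord [tuple (1 : L)] 0 1 = 1.
    by apply: (coord_free 0 0); rewrite seq1_free oner_neq0.
  by rewrite !linearZ /= c1 mulr1 mulrC.
exact: leq_trans (mxrankM_maxl _ _) (rank_leq_col _).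
Qed.

Lemma rk_annihilator p (c : 'rV[L]_n) (U : 'M[F]_(p, n)) :
  (forall l, \sum_j U l j *: c 0 j = 0) -> (rk c + \rank U <= n)%N.
Proof.
move=> Uc0.
have : (U <= kermx (expand_mx c)^T)%MS.
  apply/sub_kermxP/matrixP => l i; rewrite !mxE.
  transitivity (coord (vbasis {:L}) i (\sum_j U l j *: c 0 j)).
    by rewrite linear_sum; apply: eq_bigr => j _; rewrite !mxE linearZ.
  by rewrite Uc0 linear0.
move/mxrankS; rewrite mxrank_ker mxrank_tr /rk.
by have := rank_leq_col (expand_mx c); lia.
Qed.

Variable s : nat.
Hypotheses (s_gt0 : (0 < s)%N) (coprime_s : coprime s (\dim {:L})).
Local Notation sigma := (frob s).

Lemma frob_fixed_rk1 (w : 'rV[L]_n) : map_mx sigma w = w -> (rk w <= 1)%N.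
Proof.
move=> /rowP fixed_w; apply: rk_le1 => j; apply: frob_fixed_mem1 s_gt0 coprime_s _.
by have := fixed_w j; rewrite mxE.
Qed.

(* Normalising a coordinate to 1 and subtracting the Frobenius image shortens
   the support, so a nonzero vector of minimal support in W is fixed. *)
Lemma frob_stable_rk1 p (W : 'M[L]_(p, n)) :
  (map_mx sigma W <= W)%MS -> W != 0 ->
  exists w : 'rV_n, [/\ (w <= W)%MS, w != 0 & (rk w <= 1)%N].
Proof.
move=> sW; rewrite -nz_row_eq0; move: (nz_row W) (nz_row_sub W) => w.
have [t] := ubnP #|[set j | w 0 j != 0]|.
elim: t => // t IH in w *; rewrite ltnS => supp_w w_W nz_w.
have [j0 w_j0] := rV_neq0_entry nz_w.
set w' := (w 0 j0)^-1 *: w.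
have w'_W : (w' <= W)%MS by apply: scalemx_sub.
have w'_j0 : w' 0 j0 = 1 by rewrite mxE mulVf.
have nz_w' : w' != 0 by apply: contra_neq (oner_neq0 L) => w'0; rewrite -w'_j0 w'0 mxE.
set d := map_mx sigma w' - w'.
have [d0|nz_d] := eqVneq d 0.
  by exists w'; split=> //; apply: frob_fixed_rk1; apply/eqP; rewrite -subr_eq0 -/d d0.
apply: (IH d) => //; last first.
  by rewrite addmx_sub ?eqmx_opp // (submx_trans _ sW) // map_submx.
have supp_d : [set j | d 0 j != 0] \subset [set j | w 0 j != 0] :\ j0.
  apply/subsetP => j; rewrite !inE; apply: contraR; rewrite negb_and negbK.
  case/orP=> [/eqP->|/negPn/eqP w_j]; first by rewrite !mxE mulVf // rmorph1 subrr.
  by rewrite !mxE w_j mulr0 rmorph0 subrr.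
apply: leq_trans supp_w; rewrite [X in (_ < X)%N](cardsD1 j0) inE w_j0.
exact: subset_leq_card.
Qed.

End RankBounds.

Section GabidulinRows.
Variables (F : finFieldType) (L : fieldExtType F) (n s : nat) (g : 'rV[L]_n).

Lemma row_gab_mx t (i : 'I_t) : row i (gab_mx t s g) = map_mx (frob (s * i)) g.
Proof. by apply/rowP => j; rewrite !mxE. Qed.

Lemma gab_mx_subS t : (gab_mx t s g <= gab_mx t.+1 s g)%MS.
Proof.
apply/row_subP => i; rewrite row_gab_mx.
by rewrite -(row_gab_mx (widen_ord (leqnSn t) i)) row_sub.
Qed.

Lemma map_gab_mx_subS t : (map_mx (frob s) (gab_mx t s g) <= gab_mx t.+1 s g)%MS.
Proof.
apply/row_subP => i; rewrite -map_row row_gab_mx.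
suff -> : map_mx (frob s) (map_mx (frob (s * i)) g)
    = row (lift ord0 i) (gab_mx t.+1 s g) by exact: row_sub.
by rewrite row_gab_mx; apply/rowP => j; rewrite !mxE frobD mulnS addnC.
Qed.

Lemma gab_mx_neq0 t : g != 0 -> gab_mx t.+1 s g != 0.
Proof.
apply: contraNneq => gab0; apply/eqP/rowP => j.
have /rowP/(_ j) := row_gab_mx (ord0 : 'I_t.+1).
by rewrite gab0 row0 !mxE muln0 frob0 => <-.
Qed.

Lemma gab_mx_relation t (u : 'I_n -> F) : \sum_j u j *: g 0 j = 0 ->
  forall c : 'rV[L]_n, (c <= gab_mx t s g)%MS -> \sum_j u j *: c 0 j = 0.
Proof.
move=> g_u c /submxP[a ->].
transitivity (\sum_i a 0 i * frob (s * i) (\sum_j u j *: g 0 j)); last first.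
  by rewrite g_u big1 // => i _; rewrite rmorph0 mulr0.
under eq_bigr do rewrite mxE scaler_sumr.
rewrite exchange_big; apply: eq_bigr => i _ /=.
rewrite linear_sum mulr_sumr; apply: eq_bigr => j _.
by rewrite !mxE linearZ scalerAr.
Qed.

End GabidulinRows.

Section FrobeniusCap.
Variables (F : finFieldType) (L : fieldExtType F) (n s p : nat) (A : 'M[L]_(p, n)).
Local Notation sigma := (frob s).

Fixpoint frob_cap i : 'M[L]_n :=
  if i is i'.+1 then (frob_cap i' :&: map_mx sigma (frob_cap i'))%MS else <<A>>%MS.

Lemma frob_capS i : frob_cap i.+1 = (frob_cap i :&: map_mx sigma (frob_cap i))%MS.
Proof. by []. Qed.

Lemma frob_cap_rank_concave i :
  (2 * \rank (frob_cap i.+1) <= \rank (frob_cap i) + \rank (frob_cap i.+2))%N.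
Proof.
have := mxrank_sum_cap (frob_cap i.+1) (map_mx sigma (frob_cap i.+1)).
have sub_sum :
    (frob_cap i.+1 + map_mx sigma (frob_cap i.+1) <= map_mx sigma (frob_cap i))%MS.
  by rewrite addsmx_sub capmxSr map_submx capmxSl.
have := mxrankS sub_sum; rewrite !mxrank_map -frob_capS; lia.
Qed.

Lemma frob_cap_rank_lb : (\rank (col_mx A (map_mx sigma A)) <= (\rank A).+1)%N ->
  forall i, (\rank A <= \rank (frob_cap i) + i)%N.
Proof.
move=> rank_AsA.
have rank_cap0 : \rank (frob_cap 0) = \rank A by rewrite genmxE.
have rank_cap1 : (\rank A <= \rank (frob_cap 1) + 1)%N.
  have := mxrank_sum_cap (frob_cap 0) (map_mx sigma (frob_cap 0)).
  have -> : (frob_cap 0 + map_mx sigma (frob_cap 0) :=: col_mx A (map_mx sigma A))%MS.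
    apply: eqmx_trans (addsmxE _ _); apply: adds_eqmx; first exact: genmxE.
    exact: eqmx_trans (map_genmx _ _) (genmxE _).
  by rewrite mxrank_map rank_cap0 /=; lia.
suff step i : (\rank (frob_cap i) <= \rank (frob_cap i.+1) + 1)%N /\
    (\rank A <= \rank (frob_cap i) + i)%N by move=> i; case: (step i).
elim: i => [|i [IH1 IH2]]; first by rewrite rank_cap0; lia.
by have := frob_cap_rank_concave i; lia.
Qed.

Lemma frob_capP i (v : 'rV[L]_n) : (v <= frob_cap i)%MS -> forall j, (j <= i)%N ->
  exists2 c : 'rV[L]_n, (c <= A)%MS & v = map_mx (frob (s * j)) c.
Proof.
elim: i v => [|i IH] v v_cap j.
  rewrite leqn0 => /eqP->; exists v; first by rewrite genmxE in v_cap.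
  by apply/rowP => l; rewrite mxE muln0 frob0.
move: v_cap; rewrite frob_capS sub_capmx => /andP[v_cap v_sigma].
rewrite leq_eqVlt ltnS => /orP[/eqP->|]; last exact: IH v_cap j.
case/submxP: v_sigma => a ->.
pose a' := map_mx (frob (s * (\dim {:L}).-1)) a.
have {1}-> : a = map_mx sigma a' by apply/rowP => x; rewrite !mxE frobK.
rewrite -map_mxM; have [c c_A ->] := IH _ (submxMl a' _) i (leqnn i).
by exists c => //; apply/rowP => l; rewrite !mxE /= frobD mulnS.
Qed.

End FrobeniusCap.

Section SystematicMRD.
Variables (F : finFieldType) (L : fieldExtType F) (k r s : nat) (X : 'M[L]_(k, r)).
Local Notation n := (k + r)%N.
Local Notation G := (row_mx (1%:M : 'M[L]_k) X).
Local Notation sigma := (frob s).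
Hypotheses (MRD_G : is_MRD G) (k_gt0 : (0 < k)%N) (r_gt0 : (0 < r)%N)
  (s_gt0 : (0 < s)%N) (coprime_s : coprime s (\dim {:L})).

Lemma MRD_rk_gt (c : 'rV[L]_n) : (c <= G)%MS -> c != 0 -> (r < rk c)%N.
Proof.
move=> c_G nz_c; case: MRD_G => _ [dist_G _].
by have := dist_G c 0 c_G (sub0mx _ _) nz_c; rewrite /dR subr0 addKn addn1.
Qed.

Lemma frob_stable_subcode_eq0 p (W : 'M[L]_(p, n)) :
  (W <= G)%MS -> (map_mx sigma W <= W)%MS -> W = 0.
Proof.
move=> W_G sW; have [//|nz_W] := eqVneq W 0; exfalso.
have [w [w_W nz_w rk_w]] := frob_stable_rk1 s_gt0 coprime_s sW nz_W.
by have := MRD_rk_gt (submx_trans w_W W_G) nz_w; lia.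
Qed.

Lemma rank_col_G_frob :
  \rank (col_mx G (map_mx sigma G)) = (k + \rank (frob_mx s X - X)%R)%N.
Proof. by rewrite map_row_mx map_mx1 mxrank_col_row_mx1. Qed.

Lemma frob_mx_subr_neq0 : frob_mx s X - X != 0.
Proof.
apply/eqP => /subr0_eq sX.
have sG : map_mx sigma G = G by rewrite map_row_mx map_mx1 [map_mx _ X]sX.
have := frob_stable_subcode_eq0 (submx_refl G); rewrite sG submx_refl => /(_ isT)/eqP.
by rewrite -mxrank_eq0 (proj1 MRD_G) gtn_eqF.
Qed.

Lemma gab_code_rank1 g : (G == gab_mx k s g)%MS -> \rank (frob_mx s X - X) = 1%N.
Proof.
move=> /andP[G_gab _].
have : (col_mx G (map_mx sigma G) <= gab_mx k.+1 s g)%MS.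
  rewrite col_mx_sub (submx_trans G_gab (gab_mx_subS _ _ _)).
  by rewrite (submx_trans _ (map_gab_mx_subS _ _ _)) ?map_submx.
move/mxrankS/leq_trans/(_ (rank_leq_row _)); rewrite rank_col_G_frob.
by have := frob_mx_subr_neq0; rewrite -mxrank_eq0; lia.
Qed.

Lemma frob_orbit_in_code : \rank (frob_mx s X - X) = 1%N ->
  exists2 g : 'rV[L]_n, g != 0 & (gab_mx k s g <= G)%MS.
Proof.
move=> rank1.
have rank_cap : (0 < \rank (frob_cap s G k.-1))%N.
  have := frob_cap_rank_lb (s := s) (A := G).
  rewrite rank_col_G_frob rank1 (proj1 MRD_G).
  by rewrite addn1 => /(_ (leqnn _) k.-1); lia.
have v_cap := nz_row_sub (frob_cap s G k.-1).
have nz_v : nz_row (frob_cap s G k.-1) != 0 by rewrite nz_row_eq0 -mxrank_eq0 -lt0n.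
have [g g_G Eg] := frob_capP v_cap (leqnn k.-1).
exists g.
  by apply: contraNneq nz_v => g0; rewrite Eg g0 map_mx0.
apply/row_subP => i; rewrite row_gab_mx.
have [c c_G Ec] := frob_capP v_cap (leq_subr i k.-1).
suff -> : map_mx (frob (s * i)) g = c by [].
apply/rowP => l; apply: (@frob_inj _ _ (s * (k.-1 - i))).
have /rowP/(_ l) := etrans (esym Ec) Eg; rewrite !mxE => ->.
by rewrite frobD -mulnDr subnK // -ltnS prednK.
Qed.

Lemma rank_gab_mx t g : g != 0 -> (gab_mx t s g <= G)%MS -> \rank (gab_mx t s g) = t.
Proof.
move=> nz_g; elim: t => [|t IH] gab_G; first by apply/eqP; rewrite -leqn0 rank_leq_row.
have gab_subS := gab_mx_subS s g t.
have rank_t := IH (submx_trans gab_subS gab_G).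
apply/eqP; rewrite eqn_leq rank_leq_row ltnNge /=; apply/negP => rank_le.
have gab_subSK : (gab_mx t.+1 s g <= gab_mx t s g)%MS.
  by rewrite -(mxrank_leqif_sup gab_subS).2 eqn_leq rank_t rank_le -{1}rank_t mxrankS.
have stable : (map_mx sigma (gab_mx t.+1 s g) <= gab_mx t.+1 s g)%MS.
  by apply: submx_trans (map_gab_mx_subS s g t); rewrite map_submx.
by have := gab_mx_neq0 s t nz_g; rewrite (frob_stable_subcode_eq0 gab_G stable) eqxx.
Qed.

(* An F-linear relation on the coordinates of all codewords would give a codeword
   vanishing on k - 1 coordinates and satisfying one more relation, hence of rank
   at most r. *)
Lemma code_relation_trivial (u : 'I_n -> F) :
  (forall c : 'rV[L]_n, (c <= G)%MS -> \sum_j u j *: c 0 j = 0) -> forall j, u j = 0.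
Proof.
move=> u_G j1; apply/eqP/contraT => u_j1.
have [l0 l0_j1] : exists l0, forall l, l != l0 -> lshift r l != j1.
  case: (split j1) (splitK j1) => [l0|j] <-.
    by exists l0 => l; rewrite eq_lshift.
  by exists (Ordinal k_gt0) => l _; rewrite eq_sym eq_rlshift.
set c := row l0 G.
have nz_c : c != 0.
  apply/eqP => /rowP/(_ (lshift r l0)).
  by rewrite mxE [RHS]mxE row_mxEl mxE eqxx; apply/eqP; exact: oner_neq0.
set U := \matrix_(l, j) if l == l0 then u j else (j == lshift r l)%:R.
have U_free : row_free U := row_free_delta_rows_but (@lshift_inj k r) u_j1 l0_j1.
have U_c : forall l, \sum_j U l j *: c 0 j = 0.
  move=> l; under eq_bigr do rewrite mxE.
  case: (l =P l0) => [_|/eqP nl]; first exact: u_G (row_sub _ _).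
  rewrite (bigD1 (lshift r l)) //= eqxx scale1r big1 ?addr0 => [|j /negbTE-> //].
    by rewrite mxE row_mxEl mxE eq_sym (negbTE nl).
  by rewrite scale0r.
have := rk_annihilator U_c; rewrite (eqP U_free).
by have := MRD_rk_gt (row_sub l0 G) nz_c; rewrite -/c; lia.
Qed.

Lemma gab_free g : (G <= gab_mx k s g)%MS -> free [seq g 0 j | j <- enum 'I_n].
Proof.
move=> G_gab; rewrite (_ : [seq _ | _ <- _] = [tuple g 0 j | j < n]) //.
apply/freeP => u g_u; apply: code_relation_trivial => c c_G.
apply: gab_mx_relation (submx_trans c_G G_gab).
by rewrite -{}[RHS]g_u; apply: eq_bigr => j _; rewrite nth_mktuple.
Qed.

Lemma is_gen_gabidulin_iff_rank1 :
  is_gen_gabidulin s G <-> \rank (frob_mx s X - X) = 1%N.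
Proof.
split=> [[g [_ G_gab]]|rank1]; first exact: gab_code_rank1 G_gab.
have [g nz_g gab_G] := frob_orbit_in_code rank1.
have G_gab : (G <= gab_mx k s g)%MS.
  by rewrite -(mxrank_leqif_sup gab_G).2 rank_gab_mx // (proj1 MRD_G).
by exists g; split; [exact: gab_free | apply/andP].
Qed.

End SystematicMRD.

Theorem lemma3p3 (F : finFieldType) (L : fieldExtType F) (k r s : nat)
    (X : 'M[L]_(k, r)) :
  (2 <= \dim {:L})%N -> (1 <= k)%N -> (1 <= r)%N ->
  is_MRD (row_mx 1%:M X) ->
  (0 < s < \dim {:L})%N -> coprime s (\dim {:L}) ->
  is_gen_gabidulin s (row_mx 1%:M X) <->
  \rank (frob_mx s X - X) = 1%N.
Proof.
move=> _ k_gt0 r_gt0 MRD_G /andP[s_gt0 _] coprime_s.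
exact: is_gen_gabidulin_iff_rank1.
Qed.
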